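(* Let $L$ be a lattice with almost permutable congruences. Then $\operatorname{Con}_c L$ satisfies $\mathrm{URP}_1^-$ at every principal congruence $\Theta_L(u,v)$, $u,v\in L$.
   Context: Two congruences $\alpha,\beta$ of a lattice are almost permutable if $\alpha\vee\beta=\alpha\beta\cup\beta\alpha$, where $\alpha\beta=\{(x,y): \exists z,\ (x,z)\in\alpha,\ (z,y)\in\beta\}$; $L$ has almost permutable congruences if any two of its congruences are almost permutable. $\operatorname{Con}_c L$ is the $\{\vee,0\}$-semilattice of compact congruences of $L$, and $\Theta_L(u,v)$ is the least congruence identifying $u,v$. Let $S$ be a join-semilattice, $\varepsilon\in S$, and $\sigma=((\alpha_i,\beta_i))_{i\in I}$ a family in $S\times S$ with $\alpha_i\vee\beta_i=\varepsilon$ for all $i$. $S$ satisfies $\mathrm{URP}_1^-$ at $\sigma$ if there exist a subset $X\subseteq I$, a family $((\alpha_i^*,\beta_i^* ))_{i\in I}$ in $S\times S$ and a family $(\gamma_{i,j})_{(i,j)\in I\times I}$ in $S$ such that: (i) $\alpha_i^*\leq\alpha_i$, $\beta_i^*\leq\beta_i$, $\alpha_i^*\vee\beta_i^*=\varepsilon$ for all $i$; (ii) $\gamma_{i,j}\leq\alpha_i^*$ and $\gamma_{i,j}\leq\beta_j^*$ for all $i,j$; (iii) $\alpha_i^*\leq\alpha_j^*\vee\gamma_{i,j}$ and $\beta_j^*\leq\beta_i^*\vee\gamma_{i,j}$ for all $i,j$; (iv) $\gamma_{i,k}\leq\gamma_{i,j}\vee\gamma_{j,k}$ for all $i,j,k\in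 I$ such that ($\{i,k\}\subseteq X\Rightarrow j\in X$) and ($\{i,k\}\subseteq I\setminus X\Rightarrow j\in I\setminus X$). $S$ satisfies $\mathrm{URP}_1^-$ at $\varepsilon$ if it satisfies $\mathrm{URP}_1^-$ at every such family $\sigma$ with $\alpha_i\vee\beta_i=\varepsilon$ for all $i$. *)

From HB Require Import structures.
From mathcomp Require Import all_boot all_order.
From Stdlib Require List.
Set Implicit Arguments. Unset Strict Implicit. Unset Printing Implicit Defensive.
Import Order.LTheory.
Local Open Scope order_scope.

Section Congruences.
Context {d : Order.disp_t} (L : latticeType d).

Definition lrel := L -> L -> Prop.

Definition rle (a b : lrel) : Prop := forall x y, a x y -> b x y.
Definition req (a b : lrel) : Prop := forall x y, a x y <-> b x y.

Definition is_con (t : lrel) : Prop :=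
  [/\ (forall x, t x x),
      (forall x y, t x y -> t y x),
      (forall x y z, t x y -> t y z -> t x z),
      (forall x y z, t x y -> t (x `&` z) (y `&` z)) &
      (forall x y z, t x y -> t (x `|` z) (y `|` z))].

Definition con_bigjoin (F : lrel -> Prop) : lrel :=
  fun x y => forall t, is_con t -> (forall f, F f -> rle f t) -> t x y.

Definition con_join (a b : lrel) : lrel :=
  fun x y => forall t, is_con t -> rle a t -> rle b t -> t x y.

Definition Theta (u v : L) : lrel :=
  fun x y => forall t, is_con t -> t u v -> t x y.

Definition compact_con (a : lrel) : Prop :=
  forall F : lrel -> Prop, (forall f, F f -> is_con f) ->
    rle a (con_bigjoin F) ->
    exists s : seq lrel, (forall f, List.In f s -> F f) /\
      rle a (con_bigjoin (fun f => List.In f s)).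

Definition in_Conc (a : lrel) : Prop := is_con a /\ compact_con a.

Definition rcomp (a b : lrel) : lrel := fun x y => exists z, a x z /\ b z y.

Definition almost_permutable (a b : lrel) : Prop :=
  req (con_join a b) (fun x y => rcomp a b x y \/ rcomp b a x y).

Definition has_almost_permutable_congruences : Prop :=
  forall a b, is_con a -> is_con b -> almost_permutable a b.

Definition URP1m_at_family (eps : lrel) (I : Type) (alpha beta : I -> lrel) : Prop :=
  exists (X : I -> Prop) (alpha' beta' : I -> lrel) (gamma : I -> I -> lrel),
    (forall i, in_Conc (alpha' i)) /\ (forall i, in_Conc (beta' i)) /\
    (forall i j, in_Conc (gamma i j)) /\
    (forall i, rle (alpha' i) (alpha i) /\ rle (beta' i) (beta i) /\
               req (con_join (alpha' i) (beta' i)) eps) /\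
    (forall i j, rle (gamma i j) (alpha' i) /\ rle (gamma i j) (beta' j)) /\
    (forall i j, rle (alpha' i) (con_join (alpha' j) (gamma i j)) /\
                 rle (beta' j) (con_join (beta' i) (gamma i j))) /\
    (forall i j k, ((X i /\ X k) -> X j) -> ((~ X i /\ ~ X k) -> ~ X j) ->
       rle (gamma i k) (con_join (gamma i j) (gamma j k))).

Definition URP1m_at (eps : lrel) : Prop :=
  forall (I : Type) (alpha beta : I -> lrel),
    (forall i, in_Conc (alpha i)) -> (forall i, in_Conc (beta i)) ->
    (forall i, req (con_join (alpha i) (beta i)) eps) ->
    URP1m_at_family eps alpha beta.

End Congruences.

(* Put a := u ∧ v and b := u ∨ v, so that Θ(u,v) = Θ(a,b).  By almost
   permutability (a,b) lies in α_i β_i or in β_i α_i, and the middle element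
   can be pushed into [a,b]: a α_i z_i β_i b (put i in X) or a β_i z_i α_i b.
   Take for α*_i and β*_i the principal congruences of the two halves of
   [a,b] cut at z_i, and for γ_{i,j} the principal congruence of the piece of
   [a,b] cut off by z_i ∧ z_j or z_i ∨ z_j (according to whether i, j are in
   X) that lies in both α*_i and β*_j.  Every condition then reduces to the
   compatibility of congruences with ∧ and ∨ and to the convexity of
   congruence classes. *)
From mathcomp Require Import all_boot all_order.
From Stdlib Require Import ClassicalEpsilon.
From Stdlib Require List.
Import Order.LTheory.
Local Open Scope order_scope.

Section Congruence.
Context {d : Order.disp_t} {L : latticeType d}.
Implicit Types (t a b : lrel L) (x y z p q u v w : L).

Section Basics.
Context {t : lrel L} (t_con : is_con t).

Lemma con_refl x : t x x.
Proof. by case: t_con. Qed.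

Lemma con_sym {x y} : t x y -> t y x.
Proof. by case: t_con => _ H _ _ _; apply: H. Qed.

Lemma con_trans {x y z} : t x y -> t y z -> t x z.
Proof. by case: t_con => _ _ H _ _; apply: H. Qed.

Lemma conIr z {x y} : t x y -> t (x `&` z) (y `&` z).
Proof. by case: t_con => _ _ _ H _; apply: H. Qed.

Lemma conUr z {x y} : t x y -> t (x `|` z) (y `|` z).
Proof. by case: t_con => _ _ _ _ H; apply: H. Qed.

Lemma conIl z {x y} : t x y -> t (z `&` x) (z `&` y).
Proof. by rewrite ![z `&` _]meetC; apply: conIr. Qed.

Lemma conUl z {x y} : t x y -> t (z `|` x) (z `|` y).
Proof. by rewrite ![z `|` _]joinC; apply: conUr. Qed.

Lemma con_interval {x y p q} : x <= p -> p <= q -> q <= y -> t x y -> t p q.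
Proof.
move=> xp pq qy /(conUr p); rewrite (join_r xp) (join_l (le_trans pq qy)).
by move/(conIr q); rewrite (meet_l pq) (meet_r qy).
Qed.

End Basics.

(* With [T] a proposition this also covers [P -> t x y]; hence [Theta],
   [con_join] and [con_bigjoin] are congruences. *)
Lemma is_con_forall (T : Type) (R : T -> lrel L) :
  (forall s, is_con (R s)) -> is_con (fun x y => forall s, R s x y).
Proof.
move=> R_con; split=> [x s|x y h s|x y w h1 h2 s|x y w h s|x y w h s].
- exact: con_refl.
- exact: con_sym.
- exact: con_trans (h1 s) (h2 s).
- exact: conIr.
- exact: conUr.
Qed.

Lemma Theta_con p q : is_con (Theta p q).
Proof. by do 2![apply: is_con_forall => ?]; apply: is_con_forall. Qed.

Lemma con_join_con a b : is_con (con_join a b).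
Proof. by do 3![apply: is_con_forall => ?]; apply: is_con_forall. Qed.

Lemma con_bigjoin_con (F : lrel L -> Prop) : is_con (con_bigjoin F).
Proof. by do 2![apply: is_con_forall => ?]; apply: is_con_forall. Qed.

Lemma con_join_l a b : rle a (con_join a b).
Proof. by move=> x y h t _ ha _; apply: ha. Qed.

Lemma con_join_r a b : rle b (con_join a b).
Proof. by move=> x y h t _ _ hb; apply: hb. Qed.

Lemma con_join_least a b t : is_con t -> rle a t -> rle b t -> rle (con_join a b) t.
Proof. by move=> t_con ha hb x y; apply. Qed.

Lemma Theta_gen p q : Theta p q p q.
Proof. by []. Qed.

Lemma Theta_least {t p q} : is_con t -> t p q -> rle (Theta p q) t.
Proof. by move=> t_con tpq x y; apply. Qed.

Lemma Theta_sub p q p' q' :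
  (forall t, is_con t -> t p' q' -> t p q) -> rle (Theta p q) (Theta p' q').
Proof.
by move=> H; apply: Theta_least (Theta_con p' q') (H _ (Theta_con p' q') _).
Qed.

Lemma Theta_sub_join p q p1 q1 p2 q2 :
  (forall t, is_con t -> t p1 q1 -> t p2 q2 -> t p q) ->
  rle (Theta p q) (con_join (Theta p1 q1) (Theta p2 q2)).
Proof.
move=> H; have J_con := con_join_con (Theta p1 q1) (Theta p2 q2).
apply: (Theta_least J_con); apply: (H _ J_con).
  exact: con_join_l (Theta_gen p1 q1).
exact: con_join_r (Theta_gen p2 q2).
Qed.

Lemma Theta_meet_join u v : req (Theta u v) (Theta (u `&` v) (u `|` v)).
Proof.
have uv_ab t : is_con t -> t u v -> t (u `&` v) (u `|` v).
  move=> t_con tuv; apply: (con_trans t_con (y := v)).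
    by have := conIr t_con v tuv; rewrite meetxx.
  by have := conUr t_con v (con_sym t_con tuv); rewrite joinxx.
have ab_uv t : is_con t -> t (u `&` v) (u `|` v) -> t u v.
  move=> t_con tab; apply: (con_trans t_con (y := u `|` v)).
    by have := conUl t_con u tab; rewrite meetKU joinKU.
  by have := conUl t_con v (con_sym t_con tab); rewrite joinCA joinxx meetKUC.
by move=> x y; split; apply: Theta_sub.
Qed.

(* The union of the joins of the finite subfamilies of [F] is a congruence;
   it contains every member of [F], hence all of [con_bigjoin F]. *)
Definition finite_subjoin (F : lrel L -> Prop) : lrel L := fun x y =>
  exists s : seq (lrel L), (forall f, List.In f s -> F f) /\
    con_bigjoin (fun f => List.In f s) x y.

Lemma con_bigjoin_ub (F : lrel L -> Prop) f : F f -> rle f (con_bigjoin F).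
Proof. by move=> Ff x y h t _ H; apply: H Ff _ _ h. Qed.

Lemma con_bigjoin_sub (F G : lrel L -> Prop) :
  (forall f, F f -> G f) -> rle (con_bigjoin F) (con_bigjoin G).
Proof. by move=> FG x y H t t_con HG; apply: H => // f /FG; apply: HG. Qed.

Lemma finite_subjoin_con (F : lrel L -> Prop) : is_con (finite_subjoin F).
Proof.
have J_con s := con_bigjoin_con (fun f => List.In f s).
split.
- by move=> x; exists [::]; split=> //; exact: (con_refl (J_con [::]) x).
- by move=> x y [s [Fs H]]; exists s; split; last exact: (con_sym (J_con s) H).
- move=> x y w [s1 [Fs1 H1]] [s2 [Fs2 H2]]; exists (s1 ++ s2); split.
    by move=> f /(List.in_app_or s1 s2 f) [/Fs1 | /Fs2].
  apply: (con_trans (J_con (s1 ++ s2)) (y := y)).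
    by apply: con_bigjoin_sub H1 => f Hf; apply: List.in_or_app; left.
  by apply: con_bigjoin_sub H2 => f Hf; apply: List.in_or_app; right.
- by move=> x y w [s [Fs H]]; exists s; split; last exact: (conIr (J_con s) w H).
- by move=> x y w [s [Fs H]]; exists s; split; last exact: (conUr (J_con s) w H).
Qed.

Lemma Theta_compact p q : compact_con (Theta p q).
Proof.
move=> F _ pq_F.
have [s [Fs pq_s]] : finite_subjoin F p q.
  apply: pq_F (Theta_gen p q) _ (finite_subjoin_con F) _ => f Ff x y h.
  exists [:: f]; split; first by move=> g [<- | []].
  by apply: con_bigjoin_ub h; left.
by exists s; split=> //; apply: Theta_least (con_bigjoin_con _) pq_s.
Qed.

Lemma Theta_Conc p q : in_Conc (Theta p q).
Proof. by split; [apply: Theta_con | apply: Theta_compact]. Qed.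

Lemma rcomp_interval {a b x y} :
  is_con a -> is_con b -> x <= y -> rcomp a b x y ->
  exists2 w, x <= w <= y & a x w /\ b w y.
Proof.
move=> a_con b_con xy [w [axw bwy]]; exists ((w `|` x) `&` y).
  by rewrite lexI leUr xy leIr.
split.
  by have := conIr a_con y (conUr a_con x axw); rewrite joinxx (meet_l xy).
by have := conIr b_con y (conUr b_con x bwy); rewrite (join_l xy) meetxx.
Qed.

End Congruence.

Section Refinement.
Context {d : Order.disp_t} {L : latticeType d}.
Variables (a b : L) (I : Type) (z : I -> L) (X : I -> bool).
Hypotheses (a_le_z : forall i, a <= z i) (z_le_b : forall i, z i <= b).

Definition alpha_star i := if X i then Theta a (z i) else Theta (z i) b.
Definition beta_star i := if X i then Theta (z i) b else Theta a (z i).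
Definition gamma_star i j :=
  match X i, X j with
  | true, true => Theta (z i `&` z j) (z i)
  | true, false => Theta a (z i `&` z j)
  | false, true => Theta (z i `|` z j) b
  | false, false => Theta (z i) (z i `|` z j)
  end.

Lemma a_le_zI i j : a <= z i `&` z j.
Proof. by rewrite lexI !a_le_z. Qed.

Lemma zU_le_b i j : z i `|` z j <= b.
Proof. by rewrite leUx !z_le_b. Qed.

Lemma star_split i :
  if X i then alpha_star i a (z i) /\ beta_star i (z i) b
  else beta_star i a (z i) /\ alpha_star i (z i) b.
Proof. by rewrite /alpha_star /beta_star; case: (X i); split; apply: Theta_gen. Qed.

Lemma join_star i : req (con_join (alpha_star i) (beta_star i)) (Theta a b).
Proof.
have J_con := con_join_con (alpha_star i) (beta_star i).
have J_l := con_join_l (alpha_star i) (beta_star i).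
have J_r := con_join_r (alpha_star i) (beta_star i).
have J_sub : rle (con_join (alpha_star i) (beta_star i)) (Theta a b).
  apply: con_join_least (Theta_con a b) _ _;
    rewrite /alpha_star /beta_star; case: (X i); apply: Theta_sub => t t_con.
  - exact: (con_interval t_con (lexx a) (a_le_z i) (z_le_b i)).
  - exact: (con_interval t_con (a_le_z i) (z_le_b i) (lexx b)).
  - exact: (con_interval t_con (a_le_z i) (z_le_b i) (lexx b)).
  - exact: (con_interval t_con (lexx a) (a_le_z i) (z_le_b i)).
move=> x y; split; first exact: J_sub.
apply: (Theta_least J_con); case: (X i) (star_split i) => -[h1 h2].
  exact: (con_trans J_con (J_l _ _ h1) (J_r _ _ h2)).
exact: (con_trans J_con (J_r _ _ h1) (J_l _ _ h2)).
Qed.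

Lemma gamma_sub_star i j :
  rle (gamma_star i j) (alpha_star i) /\ rle (gamma_star i j) (beta_star j).
Proof.
rewrite /gamma_star /alpha_star /beta_star.
case: (X i); case: (X j); split; apply: Theta_sub => t t_con h.
- exact: (con_interval t_con (a_le_zI i j) (leIl _ _) (lexx _) h).
- by have := conIl t_con (z i) h; rewrite (meet_l (z_le_b i)).
- exact: (con_interval t_con (lexx _) (a_le_zI i j) (leIl _ _) h).
- exact: (con_interval t_con (lexx _) (a_le_zI i j) (leIr _ _) h).
- exact: (con_interval t_con (leUl _ _) (zU_le_b i j) (lexx _) h).
- exact: (con_interval t_con (leUr _ _) (zU_le_b i j) (lexx _) h).
- exact: (con_interval t_con (lexx _) (leUl _ _) (zU_le_b i j) h).
- by have := conUl t_con (z i) h; rewrite (join_l (a_le_z i)).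
Qed.

Lemma star_sub_join_gamma i j :
  rle (alpha_star i) (con_join (alpha_star j) (gamma_star i j)) /\
  rle (beta_star j) (con_join (beta_star i) (gamma_star i j)).
Proof.
rewrite /gamma_star /alpha_star /beta_star.
case: (X i); case: (X j); split; apply: Theta_sub_join => t t_con h1 h2.
- have := conIl t_con (z i) h1; rewrite (meet_r (a_le_z i)) => h3.
  exact: (con_trans t_con h3 h2).
- have := conUr t_con (z j) h2; rewrite meetUK => h3.
  have := conUr t_con (z j) h1; rewrite (join_l (z_le_b j)) => h4.
  exact: (con_trans t_con h3 h4).
- have := conIl t_con (z i) h1; rewrite (meet_l (z_le_b i)) => h3.
  exact: (con_trans t_con h2 h3).
- have := conIr t_con (z j) h1; rewrite (meet_r (z_le_b j)) => h3.
  exact: (con_trans t_con h2 h3).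
- have := conUl t_con (z i) h1; rewrite (join_l (a_le_z i)) => h3.
  exact: (con_trans t_con h3 h2).
- have := conUr t_con (z j) h1; rewrite (join_r (a_le_z j)) => h3.
  exact: (con_trans t_con h3 h2).
- have := conUl t_con (z i) h1; rewrite (join_r (z_le_b i)) => h3.
  exact: (con_trans t_con h2 h3).
- have := conUr t_con (z j) h1; rewrite (join_r (a_le_z j)) => h3.
  exact: (con_trans t_con h1 (con_trans t_con h2 (con_sym t_con h3))).
Qed.

Lemma gamma_star_trans i j k :
  (X i /\ X k -> X j) -> (~ X i /\ ~ X k -> ~ X j) ->
  rle (gamma_star i k) (con_join (gamma_star i j) (gamma_star j k)).
Proof.
rewrite /gamma_star; case: (X i); case: (X j); case: (X k) => Xj_in Xj_out;
  try apply: Theta_sub_join => t t_con h1 h2.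
- have A := conIr t_con (z k) h1.
  have := conIl t_con (z i) h2; rewrite meetA => B.
  exact: (con_trans t_con (con_sym t_con A) (con_trans t_con B h1)).
- have A := conIr t_con (z k) h1.
  have := conIl t_con (z i) h2; rewrite meetA (meet_r (a_le_z i)) => B.
  exact: (con_trans t_con B A).
- by have := Xj_in (conj isT isT).
- have := conIr t_con (z k) h1; rewrite (meet_l (a_le_z k)) meetAC => C.
  have := conIl t_con (z i `&` z k) h2.
  rewrite (meet_l (le_trans (leIr (z k) (z i)) (leUr (z k) (z j)))) => D.
  exact: (con_trans t_con C D).
- have := conUr t_con (z k) h1; rewrite (join_l (z_le_b k)) => E.
  have := conUl t_con (z i `|` z k) h2.
  rewrite (join_l (le_trans (leIr (z k) (z j)) (leUr (z k) (z i)))) joinAC => F.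
  exact: (con_trans t_con F E).
- by exfalso; apply: Xj_out.
- have G := conUr t_con (z k) h1.
  have := conUl t_con (z i) h2; rewrite joinA (join_r (z_le_b i)) => H.
  exact: (con_trans t_con G H).
- have G := conUr t_con (z k) h1.
  have := conUl t_con (z i) h2; rewrite joinA => H.
  exact: (con_trans t_con h1 (con_trans t_con H (con_sym t_con G))).
Qed.

Lemma URP1m_at_family_star (eps : lrel L) (alpha beta : I -> lrel L) :
  (forall i, is_con (alpha i)) -> (forall i, is_con (beta i)) ->
  (forall i, if X i then alpha i a (z i) /\ beta i (z i) b
             else beta i a (z i) /\ alpha i (z i) b) ->
  req (Theta a b) eps -> URP1m_at_family eps alpha beta.
Proof.
move=> alpha_con beta_con split_z ab_eps.
have star_sub i : rle (alpha_star i) (alpha i) /\ rle (beta_star i) (beta i).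
  rewrite /alpha_star /beta_star.
  by case: (X i) (split_z i) => -[h1 h2]; split; apply: Theta_least.
exists (fun i => X i), alpha_star, beta_star, gamma_star.
split; first by move=> i; rewrite /alpha_star; case: (X i); apply: Theta_Conc.
split; first by move=> i; rewrite /beta_star; case: (X i); apply: Theta_Conc.
split.
  by move=> i j; rewrite /gamma_star; case: (X i); case: (X j); apply: Theta_Conc.
split.
  move=> i; have [alpha_sub beta_sub] := star_sub i.
  split=> //; split=> // x y.
  exact: iff_trans (join_star i x y) (ab_eps x y).
split; first exact: gamma_sub_star.
split; first exact: star_sub_join_gamma.
exact: gamma_star_trans.
Qed.

End Refinement.

Theorem theorem2p4 (d : Order.disp_t) (L : latticeType d) :
  has_almost_permutable_congruences L ->
  forall u v : L, URP1m_at (Theta u v).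
Proof.
move=> apc u v I alpha beta alpha_Conc beta_Conc join_eps.
have alpha_con i := proj1 (alpha_Conc i); have beta_con i := proj1 (beta_Conc i).
pose a := u `&` v; pose b := u `|` v.
have ab : a <= b := le_trans (leIl u v) (leUl u v).
have split_ab i : exists xw : bool * L,
    [/\ a <= xw.2, xw.2 <= b & if xw.1 then alpha i a xw.2 /\ beta i xw.2 b
                               else beta i a xw.2 /\ alpha i xw.2 b].
  have : con_join (alpha i) (beta i) a b.
    by apply/join_eps/(Theta_meet_join u v); apply: Theta_gen.
  case/(apc _ _ (alpha_con i) (beta_con i)).
    case/(rcomp_interval (alpha_con i) (beta_con i) ab) => w /andP[aw wb] h.
    by exists (true, w).
  case/(rcomp_interval (beta_con i) (alpha_con i) ab) => w /andP[aw wb] h.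
  by exists (false, w).
have [xw split_xw] := choice _ split_ab.
apply: (URP1m_at_family_star a b I (fun i => (xw i).2) (fun i => (xw i).1)).
- by move=> i; case: (split_xw i).
- by move=> i; case: (split_xw i).
- exact: alpha_con.
- exact: beta_con.
- by move=> i; case: (split_xw i).
- by move=> x y; split=> /(Theta_meet_join u v x y).
Qed.
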